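(* For each $\mathbf{s} \in \mathcal{S}$, $\bar{\mathbf{p}}^{\epsilon}(\mathbf{s})$ is continuous in $\epsilon > 0$.
   Context: There are $N$ systems $\mathcal{A} = \{1,\ldots,N\}$. $B = [b_{i,j}]$ is a nonnegative $N\times N$ matrix with $b_{i,j} = \beta_{j,i} \ge 0$ (infection rate from system $j$ to system $i$), $\beta_{i,i}=0$; the directed graph with an edge $(i,j)$ iff $\beta_{i,j}>0$ is weakly connected (not necessarily strongly connected). $\boldsymbol{\lambda} \in \mathbb{R}_+^N$ is the vector of external attack rates (some entries may be zero), $\boldsymbol{\delta} > \mathbf{0}$ the recovery rates, and $\mathbf{q}(\mathbf{s}) = (q_i(s_i))_i$ the breach probabilities, where each $q_i:\mathbb{R}_+\to(0,1]$ is decreasing, strictly convex and continuously differentiable; $\mathcal{S} \subset \mathbb{R}_+^N$ is a convex feasible set of security investments. For $\epsilon > 0$, let $\boldsymbol{\lambda}^{\epsilon} := \boldsymbol{\lambda} + \epsilon \mathbf{1}$, and for fixed $\mathbf{s}$ let $\bar{\mathbf{p}}^{\epsilon}(\mathbf{s}) > \mathbf{0}$ denote the unique (strictly positive) solution $\mathbf{p}$ of $(\mathbf{1} - \mathbf{p}) \circ (\boldsymbol{\lambda}^{\epsilon} + B \mathbf{p}) - \mathbf{q}(\mathbf{s})^{-1} \circ \boldsymbol{\delta} \circ \mathbf{p} = \mathbf{0}$, where $\circ$ and $\mathbf{q}(\mathbf{s})^{-1}$ are elementwise product and inverse. *)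

From HB Require Import structures.
From mathcomp Require Import all_boot all_order all_algebra.
From mathcomp Require Import all_classical all_reals all_analysis.
Set Implicit Arguments. Unset Strict Implicit. Unset Printing Implicit Defensive.
Import Order.TTheory GRing.Theory Num.Theory.
Import numFieldNormedType.Exports.
Local Open Scope classical_set_scope.
Local Open Scope ring_scope.

(* beta i j = infection rate from system i to system j (beta_{i,j});
   the matrix B of the paper is beta^T, i.e. B i j = beta j i. *)

Definition weakly_connected (N : nat) (R : realType) (beta : 'M[R]_N) : Prop :=
  forall i j : 'I_N,
    connect (fun a b : 'I_N => (0 < beta a b) || (0 < beta b a)) i j.

Definition sis_eq (N : nat) (R : realType) (beta : 'M[R]_N)
    (lam delta qs p : 'rV[R]_N) : Prop :=
  forall i : 'I_N,
    (1 - p 0 i) * (lam 0 i + \sum_(j < N) beta j i * p 0 j)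
      - (qs 0 i)^-1 * delta 0 i * p 0 i = 0.

Definition lam_eps (N : nat) (R : realType) (lam : 'rV[R]_N) (eps : R)
  : 'rV[R]_N := \row_i (lam 0 i + eps).

Definition qvec (N : nat) (R : realType) (q : 'I_N -> R -> R) (s : 'rV[R]_N)
  : 'rV[R]_N := \row_i q i (s 0 i).

From HB Require Import structures.
From mathcomp Require Import all_boot all_order all_algebra.
From mathcomp Require Import all_classical all_reals all_analysis.
From mathcomp Require Import lra.
Set Implicit Arguments. Unset Strict Implicit. Unset Printing Implicit Defensive.
Import Order.TTheory GRing.Theory Num.Theory.
Import numFieldNormedType.Exports.
Local Open Scope classical_set_scope.
Local Open Scope ring_scope.

(* With
   u = 1 and u = b / a this gives 0 <= p(b) - p(a) <= (b - a) / a for a <= b. *)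

Lemma mx_norm_le (K : realDomainType) m n (M : 'M[K]_(m, n)) e :
  0 <= e -> (forall i j, `|M i j| <= e) -> `|M| <= e.
Proof.
move=> e_ge0 Me; rewrite [leLHS]mx_normrE.
by apply: bigmax_le => // -[i j] _; apply: Me.
Qed.

Lemma cvg_of_near_dist_le (R : realType) (V : normedModType R) (f : R -> V)
    (x k : R) :
  (\forall y \near x, `|f y - f x| <= k * `|y - x|) -> f @ x --> f x.
Proof.
move=> f_lip; apply/cvgrPdist_le => e e_gt0.
have k1_gt0 : 0 < `|k| + 1 by rewrite ltr_pwDr.
have /cvgrPdist_le /(_ (e / (`|k| + 1))) near_x : (id : R -> R) @ x --> x by [].
near=> y.
rewrite distrC (le_trans (near f_lip y _)) //.
have : `|x - y| <= e / (`|k| + 1) by near: y; apply: near_x; exact: divr_gt0.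
rewrite distrC ler_pdivlMr // => yx_le.
apply: le_trans yx_le; rewrite mulrC ler_wpM2l //.
by rewrite (le_trans (ler_norm k)) // lerDl.
Unshelve. all: by end_near.
Qed.

Lemma balance_rescale_gt (R : realFieldType) (A A' P c m : R) :
  1 < m -> 0 < P -> 0 < c -> 0 <= A' ->
  (1 - P) * A = c * P -> (1 - m * P) * A' = c * (m * P) -> m * A < A'.
Proof.
move=> m_gt1 P_gt0 c_gt0 A'_ge0 balance balance'.
have P_lt_mP : P < m * P by rewrite ltr_pMl.
have pressure'_gt0 : 0 < (1 - m * P) * A'.
  by rewrite balance' mulr_gt0 // (lt_trans P_gt0).
have A'_gt0 : 0 < A'.
  rewrite lt_def A'_ge0 andbT; apply: contraTneq pressure'_gt0 => ->.
  by rewrite mulr0 ltxx.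
have mP_lt1 : 0 < 1 - m * P by move: pressure'_gt0; rewrite pmulr_lgt0.
have P_lt1 : 0 < 1 - P by lra.
rewrite -(ltr_pM2l P_lt1) mulrCA balance mulrCA -balance'.
by rewrite ltr_pM2r //; lra.
Qed.

Section PositiveSolutions.
Variables (R : realType) (N : nat) (beta : 'M[R]_N) (lam delta qs : 'rV[R]_N).
Hypothesis beta_ge0 : forall i j, 0 <= beta i j.
Hypothesis lam_ge0 : forall i, 0 <= lam 0 i.
Hypothesis delta_gt0 : forall i, 0 < delta 0 i.
Hypothesis qs_gt0 : forall i, 0 < qs 0 i.

Let pressure eps (p : 'rV[R]_N) i :=
  lam 0 i + eps + \sum_(j < N) beta j i * p 0 j.
Let recovery i := (qs 0 i)^-1 * delta 0 i.

Lemma recovery_gt0 i : 0 < recovery i.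
Proof. by rewrite /recovery mulr_gt0 ?invr_gt0. Qed.

Lemma pressure_gt0 eps (p : 'rV[R]_N) i :
  0 < eps -> (forall j, 0 <= p 0 j) -> 0 < pressure eps p i.
Proof.
move=> eps_gt0 p_ge0.
have : 0 <= \sum_(j < N) beta j i * p 0 j.
  by apply: sumr_ge0 => j _; rewrite mulr_ge0.
by rewrite /pressure; have := lam_ge0 i; lra.
Qed.

Lemma sis_eq_balance eps (p : 'rV[R]_N) :
  sis_eq beta (lam_eps lam eps) delta qs p ->
  forall i, (1 - p 0 i) * pressure eps p i = recovery i * p 0 i.
Proof.
by move=> sol i; apply/eqP; rewrite -subr_eq0; have := sol i; rewrite mxE => ->.
Qed.

Lemma sis_sol_lt1 eps (p : 'rV[R]_N) :
  0 < eps -> (forall i, 0 < p 0 i) -> sis_eq beta (lam_eps lam eps) delta qs p ->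
  forall i, p 0 i < 1.
Proof.
move=> eps_gt0 p_gt0 /sis_eq_balance balance i.
have : 0 < recovery i * p 0 i by rewrite mulr_gt0 ?recovery_gt0.
rewrite -balance pmulr_lgt0 ?subr_gt0 // pressure_gt0 // => j.
exact: ltW.
Qed.

Lemma sis_sol_le_scale eps eps' u (p p' : 'rV[R]_N) :
  0 < eps -> 0 < eps' -> 1 <= u -> eps' <= u * eps ->
  (forall i, 0 < p 0 i) -> (forall i, 0 < p' 0 i) ->
  sis_eq beta (lam_eps lam eps) delta qs p ->
  sis_eq beta (lam_eps lam eps') delta qs p' ->
  forall i, p' 0 i <= u * p 0 i.
Proof.
move=> eps_gt0 eps'_gt0 u_ge1 eps'_le p_gt0 p'_gt0 /sis_eq_balance balance
  /sis_eq_balance balance' i.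
have [k _ k_max] := @arg_maxP _ R 'I_N i xpredT (fun k => p' 0 k / p 0 k) isT.
set m := p' 0 k / p 0 k in k_max *.
have p'_le j : p' 0 j <= m * p 0 j by rewrite -ler_pdivrMr //; apply: k_max.
have p'k : p' 0 k = m * p 0 k by rewrite divfK ?gt_eqF.
have [m_le_u | u_lt_m] := leP m u.
  by rewrite (le_trans (p'_le i)) // ler_pM2r.
have m_gt1 : 1 < m := le_lt_trans u_ge1 u_lt_m.
have /ltW m_ge0 : 0 < m := lt_trans ltr01 m_gt1.
have balance'_k :
    (1 - m * p 0 k) * pressure eps' p' k = recovery k * (m * p 0 k).
  by rewrite -p'k balance'.
have pressure'_ge0 := ltW (pressure_gt0 k eps'_gt0 (fun j => ltW (p'_gt0 j))).
have := balance_rescale_gt m_gt1 (p_gt0 k) (recovery_gt0 k) pressure'_ge0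
  (balance k) balance'_k.
suff : pressure eps' p' k <= m * pressure eps p k by rewrite leNgt => /negP.
rewrite /pressure !mulrDr; apply: lerD; first apply: lerD.
- by rewrite ler_peMl // ltW.
- by rewrite (le_trans eps'_le) // ler_pM2r // ltW.
- rewrite mulr_sumr; apply: ler_sum => j _.
  by rewrite mulrCA ler_wpM2l.
Qed.

Section PositiveBranch.
Variable p : R -> 'rV[R]_N.
Hypothesis p_gt0 : forall eps, 0 < eps -> forall i, 0 < p eps 0 i.
Hypothesis p_sol :
  forall eps, 0 < eps -> sis_eq beta (lam_eps lam eps) delta qs (p eps).

Lemma sis_branch_dist_le a b : 0 < a -> a <= b ->
  forall i, `|p b 0 i - p a 0 i| <= (b - a) / a.
Proof.
move=> a_gt0 a_le_b i; have b_gt0 : 0 < b := lt_le_trans a_gt0 a_le_b.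
have ba_ge1 : 1 <= b / a by rewrite ler_pdivlMr // mul1r.
have a_le_1b : a <= 1 * b by rewrite mul1r.
have b_le_baa : b <= b / a * a by rewrite divfK ?gt_eqF.
have p_incr := sis_sol_le_scale b_gt0 a_gt0 (lexx 1) a_le_1b
  (p_gt0 b_gt0) (p_gt0 a_gt0) (p_sol b_gt0) (p_sol a_gt0) i.
have p_rel := sis_sol_le_scale a_gt0 b_gt0 ba_ge1 b_le_baa
  (p_gt0 a_gt0) (p_gt0 b_gt0) (p_sol a_gt0) (p_sol b_gt0) i.
have pa_lt1 := sis_sol_lt1 a_gt0 (p_gt0 a_gt0) (p_sol a_gt0) i.
rewrite mul1r in p_incr; rewrite ger0_norm ?subr_ge0 //.
have -> : (b - a) / a = b / a - 1 by rewrite mulrBl divff ?gt_eqF.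
have : (b / a - 1) * p a 0 i <= b / a - 1 by rewrite ler_piMr ?subr_ge0 // ltW.
lra.
Qed.

Lemma sis_branch_continuous : {in `]0, +oo[, continuous p}.
Proof.
move=> x; rewrite in_itv andbT => x_gt0.
apply: (@cvg_of_near_dist_le _ _ _ _ (2 / x)).
have x_half_lt : x / 2 < x by rewrite ltr_pdivrMr // ltr_pMr // ltr1n.
near=> y; have : y \in `]x / 2, +oo[.
  by near: y; apply: near_in_itvoy; rewrite in_itv andbT.
rewrite in_itv andbT => y_gt.
have y_gt0 : 0 < y by rewrite (lt_trans _ y_gt) ?divr_gt0.
apply: mx_norm_le => [|j i]; first by rewrite mulr_ge0 // divr_ge0 // ltW.
rewrite (ord1 j) !mxE [2 / x * _]mulrC.
have [x_le_y|/ltW y_le_x] := leP x y.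
  rewrite (le_trans (sis_branch_dist_le x_gt0 x_le_y i)) //.
  rewrite ger0_norm ?subr_ge0 // ler_wpM2l ?subr_ge0 //.
  by rewrite ler_peMl ?ler1n // invr_ge0 ltW.
rewrite distrC (le_trans (sis_branch_dist_le y_gt0 y_le_x i)) //.
rewrite distrC ger0_norm ?subr_ge0 // ler_wpM2l ?subr_ge0 //.
by rewrite -[2 / x]invf_div lef_pV2 ?posrE ?divr_gt0 // ltW.
Unshelve. all: by end_near.
Qed.

End PositiveBranch.

End PositiveSolutions.

Theorem proposition2 (R : realType) (N : nat)
    (beta : 'M[R]_N) (lam delta : 'rV[R]_N)
    (q : 'I_N -> R -> R) (S : set 'rV[R]_N)
    (* B = beta^T is nonnegative, beta_{i,i} = 0, weakly connected graph *)
    (Hbeta_ge0 : forall i j, 0 <= beta i j)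
    (Hbeta_diag : forall i, beta i i = 0)
    (Hconn : weakly_connected beta)
    (* external attack rates nonnegative, recovery rates positive *)
    (Hlam : forall i, 0 <= lam 0 i)
    (Hdelta : forall i, 0 < delta 0 i)
    (* each q_i : R_+ -> (0,1], decreasing, strictly convex, C^1 *)
    (Hq_range : forall i (x : R), 0 <= x -> 0 < q i x <= 1)
    (Hq_decr : forall i (x y : R), 0 <= x -> x < y -> q i y < q i x)
    (Hq_sconv : forall i (x y t : R), 0 <= x -> 0 <= y -> x != y -> 0 < t < 1 ->
        q i (t * x + (1 - t) * y) < t * q i x + (1 - t) * q i y)
    (Hq_cont0 : forall i, {within `[0, +oo[, continuous (q i)})
    (Hq_der : forall i (x : R), 0 < x -> derivable (q i) x 1)
    (Hq_C1 : forall i, {in `]0, +oo[, continuous (derive1 (q i))})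
    (* S convex subset of R_+^N *)
    (HS_pos : forall s, S s -> forall i, 0 <= s 0 i)
    (HS_conv : forall x y t, S x -> S y -> 0 <= t <= 1 ->
        S (t *: x + (1 - t) *: y))
    (s : 'rV[R]_N) (Hs : S s)
    (* pbar eps = the (unique) strictly positive solution for lambda^eps *)
    (pbar : R -> 'rV[R]_N)
    (Hpbar_pos : forall eps : R, 0 < eps -> forall i, 0 < pbar eps 0 i)
    (Hpbar_sol : forall eps : R, 0 < eps ->
        sis_eq beta (lam_eps lam eps) delta (qvec q s) (pbar eps)) :
  {in `]0, +oo[, continuous pbar}.
Proof.
have qs_gt0 i : 0 < qvec q s 0 i.
  by rewrite mxE; case/andP: (Hq_range i _ (HS_pos _ Hs i)).
exact: (@sis_branch_continuous R N beta lam delta (qvec q s)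
  Hbeta_ge0 Hlam Hdelta qs_gt0 pbar Hpbar_pos Hpbar_sol).
Qed.
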